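(* Let $\mathfrak{R}$ be either $\mathbb{F}_q$ ($q$ a prime power) or $\mathbb{Z}_k$ ($k\ge2$), with elements listed as $0=\omega_0,\omega_1,\dots,\omega_{|\mathfrak{R}|-1}$. Let $C$ be an $\mathfrak{R}$-linear code of length $n$ and $\bm{w}\in\mathfrak{R}^n$. Then \[ Jac^{av}(C,\bm{w}; x_{a} : a \in \mathfrak{R}^{2}) =\sum_{L,R} A_{L}^{C}\, \frac{\prod_{b\in\mathfrak{R}}\binom{\ell_b(\bm{w})}{R_{(\omega_0,b)},\ldots,R_{(\omega_{|\mathfrak{R}|-1},b)}}}{\binom{n}{L_{\omega_0},\ldots,L_{\omega_{|\mathfrak{R}|-1}}}} \prod_{a\in\mathfrak{R}^2}x_a^{R_a}, \] where the sum runs over all compositions $L$ of $n$ and all Jacobi compositions $R$ of $n$ satisfying $L_c=\sum_{b\in\mathfrak{R}}R_{(c,b)}$ for every $c\in\mathfrak{R}$ and $\ell_c(\bm{w})=\sum_{b\in\mathfrak{R}}R_{(b,c)}$ for every $c\in\mathfrak{R}$.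
   Context: An $\mathbb{F}_q$-linear code of length $n$ is a subspace of $\mathbb{F}_q^n$; a $\mathbb{Z}_k$-linear code is an additive subgroup of $\mathbb{Z}_k^n$. For $\bm{u}\in\mathfrak{R}^n$ and $a\in\mathfrak{R}$, $\ell_a(\bm{u})$ is the number of coordinates of $\bm{u}$ equal to $a$. A composition of $n$ is a vector $L=(L_a:a\in\mathfrak{R})$ of non-negative integers with $\sum_a L_a=n$; a Jacobi composition of $n$ is a vector $R=(R_a:a\in\mathfrak{R}^2)$ of non-negative integers with $\sum_a R_a=n$. $A_L^C=\#\{\bm{u}\in C : \ell_a(\bm{u})=L_a \ \forall a\in\mathfrak{R}\}$. For $a\in\mathfrak{R}^2$, $r_a(\bm{u};\bm{w})=\#\{i:(u_i,w_i)=a\}$, and $Jac(C,\bm{w};x_a:a\in\mathfrak{R}^2)=\sum_{\bm{u}\in C}\prod_{a\in\mathfrak{R}^2}x_a^{r_a(\bm{u};\bm{w})}$. For $\sigma\in S_n$, $\bm{u}^\sigma=(u_{\sigma(1)},\dots,u_{\sigma(n)})$ and $C^\sigma=\{\bm{u}^\sigma:\bm{u}\in C\}$; $Jac^{av}(C,\bm{w};x_a:a\in\mathfrak{R}^2)=\frac{1}{n!}\sum_{\sigma\in S_n}Jac(C^\sigma,\bm{w};x_a:a\in\mathfrak{R}^2)$. Multinomial coefficients: $\binom{m}{m_1,\dots,m_k}=\frac{m!}{m_1!\cdots m_k!}$. *)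

From HB Require Import structures.
From mathcomp Require Import all_boot all_order all_fingroup all_algebra.
Set Implicit Arguments. Unset Strict Implicit. Unset Printing Implicit Defensive.
Import Order.TTheory GRing.Theory Num.Theory.
Local Open Scope ring_scope.

Section JacobiDefs.
Variables (T : finType) (n : nat).

Definition ell (u : {ffun 'I_n -> T}) (a : T) : nat := #|[set i | u i == a]|.

Definition rj (u w : {ffun 'I_n -> T}) (a : T * T) : nat :=
  #|[set i | (u i, w i) == a]|.

Definition permv (s : 'S_n) (u : {ffun 'I_n -> T}) : {ffun 'I_n -> T} :=
  [ffun i => u (s i)].

Definition permC (s : 'S_n) (C : {set {ffun 'I_n -> T}}) : {set {ffun 'I_n -> T}} :=
  [set permv s u | u in C].

Definition Jac (K : fieldType) (C : {set {ffun 'I_n -> T}}) (w : {ffun 'I_n -> T})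
  (x : T * T -> K) : K :=
  \sum_(u in C) \prod_(a : T * T) x a ^+ rj u w a.

Definition Jacav (K : fieldType) (C : {set {ffun 'I_n -> T}}) (w : {ffun 'I_n -> T})
  (x : T * T -> K) : K :=
  (n`!%:R)^-1 * \sum_(s : 'S_n) Jac (permC s C) w x.

Definition Acount (C : {set {ffun 'I_n -> T}}) (L : T -> nat) : nat :=
  #|[set u in C | [forall a, ell u a == L a]]|.

Definition multinom (K : fieldType) (m : nat) {I : finType} (f : I -> nat) : K :=
  m`!%:R / \prod_(c : I) ((f c)`!)%:R.

(* compositions of n (entries are automatically <= n) *)
Definition is_composition (L : {ffun T -> 'I_n.+1}) : bool :=
  \sum_(a : T) (L a : nat) == n.

Definition is_jacobi_composition (R : {ffun T * T -> 'I_n.+1}) : bool :=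
  \sum_(a : T * T) (R a : nat) == n.

Definition compatible (w : {ffun 'I_n -> T}) (L : {ffun T -> 'I_n.+1})
  (R : {ffun T * T -> 'I_n.+1}) : bool :=
  [forall c, (L c : nat) == \sum_(b : T) (R (c, b) : nat)] &&
  [forall c, ell w c == \sum_(b : T) (R (b, c) : nat)].

Definition JacRHS (K : fieldType) (C : {set {ffun 'I_n -> T}}) (w : {ffun 'I_n -> T})
  (x : T * T -> K) : K :=
  \sum_(L : {ffun T -> 'I_n.+1} | is_composition L)
   \sum_(R : {ffun T * T -> 'I_n.+1} | is_jacobi_composition R && compatible w L R)
     (Acount C (fun a => L a))%:R
     * (\prod_(b : T) multinom K (ell w b) (fun c : T => (R (c, b) : nat)))
     / multinom K n (fun a : T => (L a : nat))
     * \prod_(a : T * T) x a ^+ R a.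

End JacobiDefs.

Definition Fq_linear (F : finFieldType) (n : nat) (C : {set {ffun 'I_n -> F}}) : Prop :=
  [ffun _ => 0] \in C /\
  forall (c : F) (u v : {ffun 'I_n -> F}), u \in C -> v \in C ->
    [ffun i => c * u i + v i] \in C.

(* Z_k-linear code: an additive subgroup of Z_k^n *)
Definition additive_code (Z : finZmodType) (n : nat) (C : {set {ffun 'I_n -> Z}}) : Prop :=
  [ffun _ => 0] \in C /\
  forall u v : {ffun 'I_n -> Z}, u \in C -> v \in C -> [ffun i => u i - v i] \in C.

From HB Require Import structures.
From mathcomp Require Import all_boot all_order all_fingroup all_algebra.
From mathcomp Require Import ring.
Set Implicit Arguments. Unset Strict Implicit. Unset Printing Implicit Defensive.
Import GRing.Theory Num.Theory.

(* For a word u of composition L, the map s |-> r(u^s; w) takes the value R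
   exactly (prod_c L_c!) (prod_b l_b(w)!) / (prod_a R_a!) times when R has row
   sums L and column sums l(w), and never otherwise.  Both factors come from
   counting permutations with prescribed images: the fibres of s |-> u^s have
   size prod_c L_c!, and s |-> v0^s maps the stabiliser of w (of order
   prod_b l_b(w)!) onto the words v with r(v; w) = R = r(v0; w), with fibres of
   size prod_a R_a!.  Averaging over S_n and grouping the words of C by
   composition gives the formula. *)

Lemma card_uniq_tuple_map (E X : finType) (f : E -> X) m (A : pred E) (s : seq X) :
  size s = m ->
  #|[set t : m.-tuple E | all A t && uniq t && (map f t == s)]| =
  \prod_(x : X) #|[pred e in A | f e == x]| ^_ (count_mem x s).
Proof.
elim: m A s => [|m IHm] A [|x0 s] //= => [_ | [size_s]].
  rewrite big1 => [|x _]; last by rewrite ffactn0.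
  by apply/eqP/cards1P; exists [tuple] => /=; apply/setP => t; rewrite [t]tuple0 !inE.
have card_predD1 j x : A j -> f j = x0 ->
    #|[pred e in [predD1 A & j] | f e == x]| = #|[pred e in A | f e == x]| - (x0 == x).
  move=> Aj fj; rewrite [in RHS](cardD1 j) !unfold_in /= Aj fj.
  case: eqP => [<-|_]; rewrite ?subn0 ?add1n ?subn1 //; apply: eq_card => e.
    by rewrite !unfold_in /= andbA.
  by rewrite !unfold_in /=; case: eqP => [->|] //=; rewrite fj => /negPf ->.
rewrite -sum1dep_card (partition_big (@thead _ _) [pred e in A | f e == x0]) /=;
  last first.
  case/tupleP=> e t; rewrite theadE /= => /andP[/andP[/andP[Ae _] _] /eqP[fe _]].
  by rewrite unfold_in Ae fe eqxx.
rewrite (eq_bigr (fun _ => \prod_x (#|[pred e in A | f e == x]| - (x0 == x))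
                                ^_ count_mem x s)); last first.
  move=> j /andP[Aj /eqP fj].
  under [RHS]eq_bigr do rewrite -(card_predD1 j) //.
  rewrite -(IHm _ _ size_s) -sum1dep_card.
  rewrite (reindex (fun t : m.-tuple E => [tuple of j :: t])) /=; last first.
    exists (fun t : m.+1.-tuple E => [tuple of behead t]) => [t _|t /andP[_ /eqP <-]].
      exact: val_inj.
    by rewrite -tuple_eta.
  have {}Aj : A j := Aj.
  apply: eq_bigl => t; rewrite theadE eqxx andbT /= Aj fj eqseq_cons eqxx /=.
  have -> : all [predD1 A & j] t = (j \notin t) && all A t.
    by rewrite -has_pred1 -all_predC -all_predI.
  by case: (j \in t); case: (all A t).
rewrite sum_nat_cond_const [in RHS](bigD1 x0) //= (bigD1 x0) //= eqxx add1n.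
rewrite ffactnS subn1 mulnA; congr (_ * _ * _).
  by apply: eq_card => e; rewrite !inE.
by apply: eq_bigr => x /negPf nx; rewrite eq_sym nx subn0 add0n.
Qed.

Lemma card_sum_fibres (I J : finType) (f : I -> J) (A : {set I}) :
  #|A| = \sum_j #|[set i in A | f i == j]|.
Proof.
rewrite -sum1_card (partition_big f predT) //.
by apply: eq_bigr => j _; rewrite sum1dep_card.
Qed.

Lemma card_const_fibres (I J : finType) (f : I -> J) (A : {set I}) (B : {set J}) k :
  (forall j, #|[set i in A | f i == j]| = (j \in B) * k) -> #|A| = #|B| * k.
Proof.
move=> fibres; rewrite (card_sum_fibres f) -sum1_card big_distrl [RHS]big_mkcond.
by apply: eq_bigr => j _; rewrite fibres; case: (j \in B); rewrite /= ?mul1n.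
Qed.

Section Profile.

Variable n : nat.

Definition profile (Y : finType) (v : {ffun 'I_n -> Y}) : {ffun Y -> 'I_n.+1} :=
  [ffun y => inord (ell v y)].

Definition zipv (S T : finType) (u : {ffun 'I_n -> S}) (w : {ffun 'I_n -> T}) :
  {ffun 'I_n -> S * T} := [ffun i => (u i, w i)].

Lemma ell_le (Y : finType) (v : {ffun 'I_n -> Y}) y : ell v y <= n.
Proof. by rewrite /ell -[X in _ <= X]card_ord max_card. Qed.

Lemma profileE (Y : finType) (v : {ffun 'I_n -> Y}) y : profile v y = ell v y :> nat.
Proof. by rewrite ffunE inordK // ltnS ell_le. Qed.

Lemma eq_profile (Y : finType) (v1 v2 : {ffun 'I_n -> Y}) :
  (profile v1 = profile v2) <-> (forall y, ell v1 y = ell v2 y).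
Proof.
split=> [eq12 y | eq12]; first by rewrite -!profileE eq12.
by apply/ffunP => y; apply/val_inj; rewrite /= !profileE.
Qed.

Lemma sum_ell (Y : finType) (v : {ffun 'I_n -> Y}) : \sum_y ell v y = n.
Proof.
rewrite -[RHS]card_ord -cardsT (card_sum_fibres v); apply: eq_bigr => y _.
by apply: eq_card => i; rewrite !inE.
Qed.

Lemma is_composition_profile (Y : finType) (v : {ffun 'I_n -> Y}) :
  is_composition (profile v).
Proof.
by apply/eqP; rewrite -[RHS](sum_ell v); apply: eq_bigr => y _; rewrite profileE.
Qed.

Lemma ell_permv (Y : finType) (s : 'S_n) (v : {ffun 'I_n -> Y}) y :
  ell (permv s v) y = ell v y.
Proof.
rewrite /ell -[in RHS](card_preimset _ (@perm_inj _ s)); apply: eq_card => i.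
by rewrite !inE ffunE.
Qed.

Lemma profile_permv (Y : finType) (s : 'S_n) (v : {ffun 'I_n -> Y}) :
  profile (permv s v) = profile v.
Proof. by apply/eq_profile => y; rewrite ell_permv. Qed.

Lemma permv_zipv (S T : finType) (s : 'S_n)
    (u : {ffun 'I_n -> S}) (w : {ffun 'I_n -> T}) :
  permv s (zipv u w) = zipv (permv s u) (permv s w).
Proof. by apply/ffunP => i; rewrite !ffunE. Qed.

Lemma zipv_inj (S T : finType)
    (u1 u2 : {ffun 'I_n -> S}) (w1 w2 : {ffun 'I_n -> T}) :
  (zipv u1 w1 == zipv u2 w2) = (u1 == u2) && (w1 == w2).
Proof.
apply/eqP/andP => [eq12 | [/eqP-> /eqP->] //].
have eq12_at i : (u1 i, w1 i) = (u2 i, w2 i).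
  by have := congr1 (fun z : {ffun _ -> S * T} => z i) eq12; rewrite !ffunE.
by split; apply/eqP/ffunP => i; case: (eq12_at i).
Qed.

Lemma rjE (T : finType) (u w : {ffun 'I_n -> T}) a : rj u w a = ell (zipv u w) a.
Proof. by apply: eq_card => i; rewrite !inE ffunE. Qed.

Lemma ell_sum_rjl (T : finType) (u w : {ffun 'I_n -> T}) c :
  ell u c = \sum_b rj u w (c, b).
Proof.
rewrite /ell (card_sum_fibres w); apply: eq_bigr => b _.
by apply: eq_card => i; rewrite !inE.
Qed.

Lemma ell_sum_rjr (T : finType) (u w : {ffun 'I_n -> T}) b :
  ell w b = \sum_c rj u w (c, b).
Proof.
rewrite /ell (card_sum_fibres u); apply: eq_bigr => c _.
by apply: eq_card => i; rewrite !inE xpair_eqE andbC.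
Qed.

Lemma compatible_profile_zipv (T : finType) (u w : {ffun 'I_n -> T}) :
  compatible w (profile u) (profile (zipv u w)).
Proof.
apply/andP; split; apply/forallP => c; apply/eqP.
  by rewrite profileE (ell_sum_rjl u w); apply: eq_bigr => b _; rewrite profileE rjE.
by rewrite (ell_sum_rjr u w); apply: eq_bigr => b _; rewrite profileE rjE.
Qed.

End Profile.

Section PermutedWords.

Variable n : nat.

Lemma ell_count (Y : finType) (v : {ffun 'I_n -> Y}) y :
  ell v y = count_mem y [seq v i | i <- enum 'I_n].
Proof. by rewrite count_map /ell cardsE cardE -size_filter enumT. Qed.

Lemma card_permv_eq (Y : finType) (u v : {ffun 'I_n -> Y}) :
  #|[set s : 'S_n | permv s u == v]| = \prod_y ell u y ^_ ell v y.
Proof.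
pose phi (s : 'S_n) := [tuple s i | i < n].
have phi_inj : injective phi.
  move=> s1 s2 /(congr1 (fun t => tnth t)) eq12; apply/permP => i.
  by have := congr1 (fun g => g i) eq12; rewrite /= !tnth_mktuple.
have phi_image : phi @: [set s | permv s u == v] =
    [set t : n.-tuple 'I_n | all predT t && uniq t &&
                             (map u t == [seq v i | i <- enum 'I_n])].
  apply/setP => t; rewrite !inE all_predT /=.
  apply/imsetP/andP => [[s] | [uniq_t /eqP ut]].
    rewrite inE => /eqP <- ->; split.
      by rewrite /= map_inj_uniq ?enum_uniq //; apply: perm_inj.
    by rewrite /= -map_comp; apply/eqP/eq_map => i; rewrite /= ffunE.
  have t_inj : injective (tnth t).
    move=> i j; rewrite !(tnth_nth (tnth_default t i)) => /eqP.
    by rewrite nth_uniq ?size_tuple // => /eqP; apply: val_inj.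
  exists (perm t_inj); last by apply: eq_from_tnth => i; rewrite tnth_mktuple permE.
  rewrite inE; apply/eqP/ffunP => i; rewrite ffunE permE.
  have := congr1 (fun s => nth (u (tnth t i)) s i) ut.
  rewrite (nth_map (tnth_default t i)) ?size_tuple // -tnth_nth => ->.
  by rewrite (nth_map i) ?size_enum_ord // nth_ord_enum.
rewrite -(card_imset _ phi_inj) phi_image (card_uniq_tuple_map u predT);
  last by rewrite size_map size_enum_ord.
apply: eq_bigr => y _; rewrite -ell_count; congr (_ ^_ _).
by apply: eq_card => i; rewrite !inE.
Qed.

Lemma card_permv_eq_profile (Y : finType) (u v : {ffun 'I_n -> Y}) :
  #|[set s : 'S_n | permv s u == v]| =
  (profile u == profile v) * \prod_y (ell u y)`!.
Proof.
have [/eq_profile same | differ] := eqVneq (profile u) (profile v).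
  by rewrite mul1n card_permv_eq; apply: eq_bigr => y _; rewrite same ffactnn.
apply: eq_card0 => s; rewrite inE; apply: contraNF differ => /eqP <-.
by rewrite profile_permv.
Qed.

Lemma permv_transport (Y : finType) (u v : {ffun 'I_n -> Y}) :
  profile u = profile v -> exists s : 'S_n, permv s u = v.
Proof.
move=> /eqP same; have : 0 < #|[set s : 'S_n | permv s u == v]|.
  by rewrite card_permv_eq_profile same mul1n prodn_gt0 // => y; rewrite fact_gt0.
by rewrite card_gt0 => /set0Pn[s]; rewrite inE => /eqP; exists s.
Qed.

Lemma exists_ffun_profile (Y : finType) (L : {ffun Y -> 'I_n.+1}) :
  is_composition L -> exists v : {ffun 'I_n -> Y}, profile v = L.
Proof.
move=> /eqP sumL; pose s := flatten [seq nseq (L y) y | y <- enum Y].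
have count_s y : count_mem y s = L y.
  rewrite count_flatten -map_comp sumnE big_map big_enum /= (bigD1 y) //=.
  rewrite count_nseq /= eqxx mul1n big1 ?addn0 // => z /negPf zy.
  by rewrite count_nseq /= zy.

have size_s : size s == n.
  rewrite size_flatten /shape -map_comp sumnE big_map big_enum; apply/eqP.
  by rewrite -[in RHS]sumL; apply: eq_bigr => y _; rewrite /= size_nseq.
exists [ffun i => tnth (Tuple size_s) i]; apply/ffunP => y; apply/val_inj.
rewrite /= profileE ell_count -count_s; congr count.
rewrite -[RHS](map_tnth_enum (Tuple size_s)).
by apply: eq_map => i; rewrite ffunE.
Qed.

End PermutedWords.

Section JacobiProfiles.

Variables (T : finType) (n : nat) (w : {ffun 'I_n -> T}).

Lemma exists_zipv_profile (R : {ffun T * T -> 'I_n.+1}) :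
  (forall b, ell w b = \sum_c (R (c, b) : nat)) ->
  exists v, profile (zipv v w) = R.
Proof.
move=> colR; have : is_composition R.
  apply/eqP; rewrite -[in RHS](sum_ell w) (eq_bigr _ (fun b _ => colR b)).
  by rewrite exchange_big pair_big; apply: eq_bigr => -[].
case/exists_ffun_profile => z prof_z.
pose z1 := [ffun i => (z i).1]; pose z2 := [ffun i => (z i).2].
have z_zip : z = zipv z1 z2 by apply/ffunP => i; rewrite !ffunE -surjective_pairing.
have /permv_transport[s <-] : profile z2 = profile w.
  apply/eq_profile => b; rewrite colR (ell_sum_rjr z1).
  by apply: eq_bigr => c _; rewrite rjE -z_zip -profileE prof_z.
by exists (permv s z1); rewrite -permv_zipv profile_permv -z_zip.
Qed.

Lemma jacobi_compatible_permv (u : {ffun 'I_n -> T}) (s : 'S_n) :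
  is_jacobi_composition (profile (zipv (permv s u) w)) &&
  compatible w (profile u) (profile (zipv (permv s u) w)).
Proof.
by rewrite [is_jacobi_composition _]is_composition_profile -(profile_permv s u)
  compatible_profile_zipv.
Qed.

Lemma card_permv_profile_zipv_fibres
    (u : {ffun 'I_n -> T}) (R : {ffun T * T -> 'I_n.+1}) :
  (forall c, ell u c = \sum_b (R (c, b) : nat)) ->
  #|[set s : 'S_n | profile (zipv (permv s u) w) == R]| =
  #|[set v | profile (zipv v w) == R]| * \prod_c (ell u c)`!.
Proof.
move=> rowR; apply: (card_const_fibres (f := fun s : 'S_n => permv s u)) => v.
rewrite inE; have [prof_v | prof_v] := eqVneq (profile (zipv v w)) R; last first.
  rewrite mul0n; apply: eq_card0 => s; rewrite !inE.
  by case: (permv s u =P v) => [->|]; rewrite ?(negPf prof_v) ?andbF.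
have same : profile u = profile v.
  apply/eq_profile => c; rewrite rowR (ell_sum_rjl v w).
  by apply: eq_bigr => b _; rewrite rjE -profileE prof_v.
transitivity #|[set s : 'S_n | permv s u == v]|.
  apply: eq_card => s; rewrite !inE.
  by case: (permv s u =P v) => [->|]; rewrite ?prof_v ?eqxx ?andbF.
by rewrite card_permv_eq_profile same eqxx !mul1n.
Qed.

Lemma card_profile_zipv (v0 : {ffun 'I_n -> T}) (R : {ffun T * T -> 'I_n.+1}) :
  profile (zipv v0 w) = R ->
  #|[set v | profile (zipv v w) == R]| * \prod_a (R a)`! = \prod_b (ell w b)`!.
Proof.
move=> prof_v0.
have <- : #|[set s : 'S_n | permv s w == w]| = \prod_b (ell w b)`!.
  by rewrite card_permv_eq_profile eqxx mul1n.
symmetry; apply: (card_const_fibres (f := fun s : 'S_n => permv s v0)) => v.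
transitivity #|[set s : 'S_n | permv s (zipv v0 w) == zipv v w]|.
  by apply: eq_card => s; rewrite !inE permv_zipv zipv_inj andbC.
rewrite card_permv_eq_profile prof_v0 inE eq_sym; congr (_ * _).
by apply: eq_bigr => a _; rewrite -profileE prof_v0.
Qed.

Lemma card_permv_profile_zipv (u : {ffun 'I_n -> T}) (R : {ffun T * T -> 'I_n.+1}) :
  compatible w (profile u) R ->
  #|[set s : 'S_n | profile (zipv (permv s u) w) == R]| * \prod_a (R a)`! =
  \prod_c (ell u c)`! * \prod_b (ell w b)`!.
Proof.
case/andP=> /forallP rowR /forallP colR.
have [v0 prof_v0] := exists_zipv_profile (fun b => eqP (colR b)).
rewrite card_permv_profile_zipv_fibres => [|c]; last first.
  by rewrite -profileE (eqP (rowR c)).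
by rewrite mulnAC (card_profile_zipv prof_v0) mulnC.
Qed.

End JacobiProfiles.

Local Open Scope ring_scope.

Section AveragedJacobi.

Variables (T : finType) (n : nat) (K : numFieldType).
Variables (w : {ffun 'I_n -> T}) (x : T * T -> K).

Definition jacobi_weight (L : {ffun T -> 'I_n.+1}) (R : {ffun T * T -> 'I_n.+1}) : K :=
  (\prod_b multinom K (ell w b) (fun c => (R (c, b) : nat)))
  / multinom K n (fun c => (L c : nat)).

Definition jacobi_class_sum (L : {ffun T -> 'I_n.+1}) : K :=
  \sum_(R : {ffun T * T -> 'I_n.+1} | is_jacobi_composition R && compatible w L R)
    jacobi_weight L R * \prod_a x a ^+ R a.

Lemma card_permv_profile_zipv_weight
    (u : {ffun 'I_n -> T}) (R : {ffun T * T -> 'I_n.+1}) :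
  n`!%:R^-1 * #|[set s : 'S_n | profile (zipv (permv s u) w) == R]|%:R =
  if is_jacobi_composition R && compatible w (profile u) R
  then jacobi_weight (profile u) R else 0.
Proof.
case: ifP => [/andP[_ compat] | incompat]; last first.
  rewrite (@eq_card0 _ [set s | _]) ?mulr0 // => s; rewrite inE.
  by apply: contraFF incompat => /eqP <-; apply: jacobi_compatible_permv.
have count := card_permv_profile_zipv compat.
have fact_neq0 m : m`!%:R != 0 :> K by rewrite pnatr_eq0 -lt0n fact_gt0.
have prod_fact_neq0 (I : finType) (f : I -> nat) : (\prod_i (f i)`!)%:R != 0 :> K.
  by rewrite pnatr_eq0 -lt0n prodn_gt0 // => i; rewrite fact_gt0.
rewrite /jacobi_weight /multinom prodf_div.
under [X in _ / X / _]eq_bigr do rewrite -natr_prod.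
rewrite -!natr_prod (eq_bigr _ (fun c _ => congr1 factorial (profileE u c))).
have -> : (\prod_b \prod_c (R (c, b))`!)%N = (\prod_a (R a)`!)%N.
  by rewrite exchange_big pair_big; apply: eq_bigr => -[].
have -> : #|[set s | profile (zipv (permv s u) w) == R]|%:R =
          (\prod_c (ell u c)`! * \prod_b (ell w b)`!)%:R / (\prod_a (R a)`!)%:R :> K.
  by rewrite -count natrM mulfK.
rewrite natrM; field.
by rewrite fact_neq0 !prod_fact_neq0.
Qed.

Lemma avg_permv_monomial (u : {ffun 'I_n -> T}) :
  n`!%:R^-1 * \sum_(s : 'S_n) \prod_a x a ^+ rj (permv s u) w a =
  jacobi_class_sum (profile u).
Proof.
pose jprof (s : 'S_n) := profile (zipv (permv s u) w).
under eq_bigr => s _ do under eq_bigr => a _ do rewrite rjE -profileE -/(jprof s).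
rewrite (partition_big jprof predT) //= mulr_sumr [RHS]big_mkcond /=.
apply: eq_bigr => R _.
have -> : \sum_(s | jprof s == R) \prod_a x a ^+ jprof s a =
          (\prod_a x a ^+ R a) *+ #|[set s | jprof s == R]|.
  by rewrite -sumr_const; apply: eq_big => [s | s /eqP ->] //; rewrite inE.
rewrite -[_ *+ #|_|]mulr_natl mulrA card_permv_profile_zipv_weight.
by case: ifP => _; rewrite ?mul0r.
Qed.

Lemma sum_by_profile (V : nmodType) (C : {set {ffun 'I_n -> T}})
    (F : {ffun T -> 'I_n.+1} -> V) :
  \sum_(u in C) F (profile u) =
  \sum_(L | is_composition L) F L *+ Acount C (fun c => L c).
Proof.
rewrite (partition_big (@profile n T) (@is_composition T n)) /=; last first.
  by move=> u _; apply: is_composition_profile.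
apply: eq_bigr => L _; rewrite (eq_bigr (fun _ => F L)) => [|u /andP[_ /eqP ->]] //.
rewrite -sumr_const; apply: eq_bigl => u; rewrite !inE; congr (_ && _).
apply/eqP/forallP => [<- c | ellL]; first by rewrite profileE.
by apply/ffunP => c; apply/val_inj; rewrite /= profileE (eqP (ellL c)).
Qed.

Lemma Jac_permC (C : {set {ffun 'I_n -> T}}) (s : 'S_n) :
  Jac (permC s C) w x = \sum_(u in C) \prod_a x a ^+ rj (permv s u) w a.
Proof.
rewrite /Jac /permC big_imset //= => u1 u2 _ _ eq12; apply/ffunP => i.
by have := congr1 (fun v : {ffun _ -> T} => v (s^-1 i)%g) eq12; rewrite !ffunE permKV.
Qed.

Lemma Jacav_eq_JacRHS (C : {set {ffun 'I_n -> T}}) : Jacav C w x = JacRHS C w x.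
Proof.
rewrite /Jacav (eq_bigr _ (fun s _ => Jac_permC C s)) exchange_big mulr_sumr.
under eq_bigr do rewrite avg_permv_monomial.
rewrite sum_by_profile /JacRHS; apply: eq_bigr => L _.
rewrite -[LHS]mulr_natl mulr_sumr.
by apply: eq_bigr => R _; rewrite /jacobi_weight !mulrA.
Qed.

End AveragedJacobi.

Theorem theorem4p2 :
  (forall (F : finFieldType) (n : nat) (C : {set {ffun 'I_n -> F}})
          (w : {ffun 'I_n -> F}) (K : numFieldType) (x : F * F -> K),
      Fq_linear C -> Jacav C w x = JacRHS C w x)
  /\
  (forall (k : nat), (1 < k)%N ->
     forall (n : nat) (C : {set {ffun 'I_n -> 'Z_k}})
            (w : {ffun 'I_n -> 'Z_k}) (K : numFieldType) (x : 'Z_k * 'Z_k -> K),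
      additive_code C -> Jacav C w x = JacRHS C w x).
Proof.
by split=> [F n C w K x _ | k _ n C w K x _]; apply: Jacav_eq_JacRHS.
Qed.
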